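(* Let $G=(V,E)$ be a finite connected simple graph and $i\in V$ such that $G-i$ is connected. Let $\tilde f:V\to\mathbb{R}$ be a solution of $$\min_{\|g\|_2=1,\ g(i)=0}\ \max_{ab\in E}|g(a)-g(b)|$$ with $\tilde f(j)>0$ for some $j$. Let $T_i^{(c)}$ be the spanning tree obtained by joining each vertex $x\ne i$ to a neighbor minimizing $\tilde f$ (ties broken arbitrarily), and for $j\in V$ let the spread-path from $j$ to $i$ be the path from $j$ to $i$ in $T_i^{(c)}$. Then every spread-path from $j$ to $i$ is a shortest path (in number of edges) from $j$ to $i$ in $G$.
   Context: Under the hypotheses, $\tilde f$ is positive on $V\setminus\{i\}$ and every vertex $x\neq i$ has a neighbor with strictly smaller $\tilde f$-value, so $T_i^{(c)}$ is a spanning tree of $G$. *)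

From HB Require Import structures.
From mathcomp Require Import all_boot all_order all_algebra.
From mathcomp Require Import reals.
Set Implicit Arguments. Unset Strict Implicit. Unset Printing Implicit Defensive.
Import Order.TTheory GRing.Theory Num.Theory.
Local Open Scope ring_scope.

Definition simple_graph (V : finType) (e : rel V) : Prop :=
  symmetric e /\ irreflexive e.

Definition connected_graph (V : finType) (e : rel V) : Prop :=
  forall x y : V, connect e x y.

Definition del_vertex (V : finType) (e : rel V) (i : V) : rel V :=
  fun a b => [&& a != i, b != i & e a b].

Definition connected_minus (V : finType) (e : rel V) (i : V) : Prop :=
  forall x y : V, x != i -> y != i -> connect (del_vertex e i) x y.

Definition norm2 (R : realType) (V : finType) (g : V -> R) : R :=
  Num.sqrt (\sum_(x : V) g x ^+ 2).

(* max_{ab in E} |g(a) - g(b)| (all terms are >= 0, so 0 is a neutral start). *)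
Definition edge_spread (R : realType) (V : finType) (e : rel V) (g : V -> R) : R :=
  \big[Num.max/0]_(ab : V * V | e ab.1 ab.2) `|g ab.1 - g ab.2|.

Definition feasible (R : realType) (V : finType) (i : V) (g : V -> R) : Prop :=
  norm2 g = 1 /\ g i = 0.

Definition is_minimizer (R : realType) (V : finType) (e : rel V) (i : V)
  (f : V -> R) : Prop :=
  feasible i f /\ forall g : V -> R, feasible i g -> edge_spread e f <= edge_spread e g.

(* p is a parent map of T_i^(c): every x <> i is joined to a neighbour p x
   minimizing f among the neighbours of x (ties broken arbitrarily). *)
Definition spread_parent (R : realType) (V : finType) (e : rel V) (i : V)
  (f : V -> R) (p : V -> V) : Prop :=
  forall x : V, x != i -> e x (p x) /\ forall y : V, e x y -> f (p x) <= f y.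

(* The walk j, p j, ..., p^k j reaches i exactly at step k (the spread-path
   from j to i in T_i^(c), of length k edges), and every walk from j to i in G
   has at least k edges, i.e. the spread-path is a shortest path. *)
Definition spread_path_is_shortest (V : finType) (e : rel V) (i : V)
  (p : V -> V) (j : V) : Prop :=
  exists k : nat,
    [/\ iter k p j = i,
        (forall m : nat, (m < k)%N -> iter m p j != i) &
        (forall s : seq V, path e j s -> last j s = i -> (k <= size s)%N)].

(* Let d be the graph distance to i.  The normalised distance d / |d|_2 is a
   competitor with edge spread at most 1 / |d|_2, so the optimal spread M
   satisfies M |d|_2 <= 1.  Conversely, every g with g(i) = 0 satisfies
   |g| <= (edge spread of g) * d along shortest paths, hence
   1 = |f|_2^2 <= M^2 |d|_2^2 <= 1 and f^2 = (M d)^2 pointwise.  Adjacent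
   vertices of G - i cannot carry opposite signs (that would be a jump of at
   least 2M), and f is positive somewhere, so f = M d on all of V.  A neighbour
   minimising f therefore minimises d, i.e. it is one step closer to i, and the
   spread-path from j has exactly d(j) edges. *)

From mathcomp Require Import all_boot all_order all_algebra.
From mathcomp Require Import reals lra zify.

Set Implicit Arguments.
Unset Strict Implicit.
Unset Printing Implicit Defensive.
Import Order.TTheory GRing.Theory Num.Theory.
Local Open Scope ring_scope.

Section Distance.
Variables (V : finType) (e : rel V) (i : V).
Hypothesis e_connected : connected_graph e.

Definition walk_to_of_size x k :=
  [exists t : k.-tuple V, path e x t && (last x t == i)].

Lemma walk_to_exists x : exists k, walk_to_of_size x k.
Proof.
have /connectP [s s_path s_last] := e_connected x i.
exists (size s); apply/existsP; exists (in_tuple s).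
by rewrite /= s_path -s_last eqxx.
Qed.

Definition dist x := ex_minn (walk_to_exists x).

Lemma dist_min x s : path e x s -> last x s = i -> (dist x <= size s)%N.
Proof.
move=> s_path s_last; rewrite /dist; case: ex_minnP => k _; apply.
by apply/existsP; exists (in_tuple s); rewrite /= s_path s_last eqxx.
Qed.

Lemma dist_walk x : exists s, [/\ path e x s, last x s = i & size s = dist x].
Proof.
rewrite /dist; case: ex_minnP => k /existsP [t /andP [t_path /eqP t_last]] _.
by exists t; rewrite size_tuple.
Qed.

Lemma dist_root : dist i = 0%N.
Proof. by apply/eqP; rewrite -leqn0 (dist_min (s := [::])). Qed.

Lemma dist_eq0 x : (dist x == 0%N) = (x == i).
Proof.
apply/eqP/eqP => [|->]; last exact: dist_root.
by have [[|y s] [_ s_last <-]] := dist_walk x.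
Qed.

Lemma dist_edge x y : e x y -> (dist x <= (dist y).+1)%N.
Proof.
move=> xy; have [s [s_path s_last <-]] := dist_walk y.
by apply: (dist_min (s := y :: s)) => //=; rewrite xy.
Qed.

Lemma dist_step x : x != i -> exists2 y, e x y & dist x = (dist y).+1.
Proof.
move=> xNi; have [[|y s] [/= s_path s_last s_size]] := dist_walk x.
  by rewrite s_last eqxx in xNi.
case/andP: s_path => xy s_path; exists y => //.
by have := dist_min s_path s_last; have := dist_edge xy; lia.
Qed.

Lemma spread_path_is_shortest_of_dist_parent (p : V -> V) :
  (forall x, x != i -> dist x = (dist (p x)).+1) ->
  forall j, spread_path_is_shortest e i p j.
Proof.
move=> dist_p j; exists (dist j).
have dist_iter m : (m <= dist j)%N -> dist (iter m p j) = (dist j - m)%N.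
  elim: m => [|m IHm] m_le; first by rewrite subn0.
  have dist_m := IHm (ltnW m_le).
  have iterNi : iter m p j != i by rewrite -dist_eq0 dist_m; lia.
  by rewrite iterS; have := dist_p _ iterNi; lia.
split=> [|m m_lt|s]; last exact: dist_min.
  by apply/eqP; rewrite -dist_eq0 dist_iter // subnn.
by rewrite -dist_eq0 dist_iter ?subn_eq0 -?ltnNge // ltnW.
Qed.

End Distance.

Section EdgeSpread.
Variables (R : realType) (V : finType) (e : rel V).

Lemma edge_spread_ge0 (g : V -> R) : 0 <= edge_spread e g.
Proof. exact: bigmax_ge_id. Qed.

Lemma edge_spread_ge (g : V -> R) a b :
  e a b -> `|g a - g b| <= edge_spread e g.
Proof. by move=> ab; apply: (le_bigmax_cond _ (j := (a, b))). Qed.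

Lemma edge_spread_le (g : V -> R) c :
  0 <= c -> (forall a b, e a b -> `|g a - g b| <= c) -> edge_spread e g <= c.
Proof. by move=> c_ge0 gc; apply: bigmax_le => // -[a b]; apply: gc. Qed.

Lemma normr_le_edge_spread_dist (i : V) (e_connected : connected_graph e)
    (g : V -> R) x :
  g i = 0 -> `|g x| <= edge_spread e g * (dist i e_connected x)%:R.
Proof.
move=> gi0.
elim: {x}(dist _ _ x) {-2}x (erefl (dist i e_connected x)) => [|n IHn] x.
  move/eqP; rewrite dist_eq0 => /eqP ->.
  by rewrite gi0 normr0 mulr_ge0 ?edge_spread_ge0.
move=> dist_x.
have xNi : x != i by rewrite -(dist_eq0 i e_connected) dist_x.
have [y xy dist_xy] := dist_step e_connected xNi.
have dist_y : dist i e_connected y = n by apply: succn_inj; rewrite -dist_xy.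
rewrite dist_x -[g x](subrK (g y)) mulrS mulrDr mulr1.
apply: le_trans (ler_normD _ _) _; apply: lerD; last by rewrite -dist_y IHn.
exact: edge_spread_ge.
Qed.

End EdgeSpread.

Lemma norm2_sqr (R : realType) (V : finType) (g : V -> R) :
  norm2 g ^+ 2 = \sum_x g x ^+ 2.
Proof. by rewrite sqr_sqrtr // sumr_ge0 // => x _; rewrite sqr_ge0. Qed.

Lemma eq_of_le_of_sum_ge (R : numDomainType) (I : finType) (u v : I -> R) :
  (forall x, u x <= v x) -> \sum_x v x <= \sum_x u x -> forall x, u x = v x.
Proof.
move=> uv vu x; have [uv_sum] := leif_sum (fun y (_ : true) => leif_eq (uv y)).
by rewrite eq_le uv_sum vu => /esym/forall_inP/(_ x isT)/eqP.
Qed.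

Section SpreadMinimizer.
Variables (R : realType) (V : finType) (e : rel V) (i : V) (f : V -> R).
Hypotheses (e_simple : simple_graph e) (e_connected : connected_graph e)
  (e_connected_minus : connected_minus e i) (f_min : is_minimizer e i f).

Local Notation d x := ((dist i e_connected x)%:R : R).
Local Notation M := (edge_spread e f).

Lemma distR_edge a b : e a b -> `|d a - d b| <= 1.
Proof.
move=> ab; have ba : e b a by rewrite (e_simple.1 b a).
have dab : d a <= d b + 1 by rewrite natr1 ler_nat dist_edge.
have dba : d b <= d a + 1 by rewrite natr1 ler_nat dist_edge.
by rewrite ler_norml; apply/andP; split; lra.
Qed.

Lemma distR_ge1 x : x != i -> 1 <= d x.
Proof. by rewrite -(dist_eq0 i e_connected) (ler1n R) lt0n. Qed.

Lemma edge_spread_norm2_dist_le1 : M * norm2 (fun x => d x) <= 1.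
Proof.
set n := norm2 _; have [-> | nN0] := eqVneq n 0; first by rewrite mulr0 ler01.
have n_gt0 : 0 < n by rewrite lt0r nN0 sqrtr_ge0.
pose g x := d x / n.
have g_feasible : feasible i g.
  split; last by rewrite /g dist_root mul0r.
  rewrite /norm2 /g; under eq_bigr do rewrite expr_div_n.
  by rewrite -mulr_suml -norm2_sqr divff ?sqrtr1 ?sqrf_eq0.
rewrite -ler_pdivlMr // mul1r; apply: le_trans (f_min.2 g g_feasible) _.
apply: edge_spread_le => [|a b ab]; first by rewrite invr_ge0 ltW.
rewrite /g -mulrBl normrM normfV (gtr0_norm n_gt0).
by apply: ler_piMl; [rewrite invr_ge0 ltW | exact: distR_edge].
Qed.

Lemma normr_f_le_edge_spread_dist x : `|f x| <= M * d x.
Proof. exact/normr_le_edge_spread_dist/f_min.1.2. Qed.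

Lemma sqr_eq_edge_spread_dist x : f x ^+ 2 = (M * d x) ^+ 2.
Proof.
move: x; apply: (@eq_of_le_of_sum_ge _ _ (fun x => f x ^+ 2)
  (fun x => (M * d x) ^+ 2)) => [x|].
  rewrite -[f x ^+ 2]real_normK ?num_real // !expr2.
  by apply: ler_pM; rewrite ?normr_ge0 ?normr_f_le_edge_spread_dist.
rewrite -(norm2_sqr f) f_min.1.1 expr1n.
under eq_bigr do rewrite exprMn.
rewrite -mulr_sumr -norm2_sqr -exprMn exprn_ile1 ?edge_spread_norm2_dist_le1 //.
by rewrite mulr_ge0 ?edge_spread_ge0 ?sqrtr_ge0.
Qed.

Hypothesis f_pos : exists j0, 0 < f j0.

Lemma edge_spread_gt0 : 0 < M.
Proof.
have [j0 fj0_gt0] := f_pos; rewrite lt_neqAle edge_spread_ge0 andbT.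
apply/eqP => M0; have := normr_f_le_edge_spread_dist j0.
rewrite -M0 mul0r => /(le_trans (ler_norm _)).
by rewrite leNgt fj0_gt0.
Qed.

Lemma f_eq_edge_spread_dist_or_opp x : f x = M * d x \/ f x = - (M * d x).
Proof.
have /eqP := sqr_eq_edge_spread_dist x.
by rewrite eqf_sqr => /orP [] /eqP; [left | right].
Qed.

Lemma edge_spread_dist_step a b : a != i -> b != i -> e a b ->
  f a = M * d a -> f b = M * d b.
Proof.
move=> aNi bNi ab fa; have [// | fb] := f_eq_edge_spread_dist_or_opp b.
have M_gt0 := edge_spread_gt0.
have Ma : M <= M * d a by apply: ler_peMr; [exact: ltW | exact: distR_ge1].
have Mb : M <= M * d b by apply: ler_peMr; [exact: ltW | exact: distR_ge1].
have := edge_spread_ge f ab; rewrite fa fb => /(le_trans (ler_norm _)).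
lra.
Qed.

Lemma f_eq_edge_spread_dist x : f x = M * d x.
Proof.
have [j0 fj0_gt0] := f_pos; have f_i : f i = 0 := f_min.1.2.
have j0Ni : j0 != i by apply: contraTneq fj0_gt0 => ->; rewrite f_i ltxx.
have f_j0 : f j0 = M * d j0.
  have [// | fj0] := f_eq_edge_spread_dist_or_opp j0.
  by move: fj0_gt0; rewrite fj0 oppr_gt0 ltNge mulr_ge0 ?edge_spread_ge0.
have [->|xNi] := eqVneq x i; first by rewrite f_i dist_root mulr0.
have /connectP [s s_path ->] := e_connected_minus j0Ni xNi.
elim: s j0 j0Ni f_j0 {fj0_gt0} s_path => [|y s IHs] a aNi fa //=.
case/andP => /and3P [_ yNi ay] s_path.
exact: IHs yNi (edge_spread_dist_step aNi yNi ay fa) s_path.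
Qed.

Lemma dist_spread_parent (p : V -> V) : spread_parent e i f p ->
  forall x, x != i -> dist i e_connected x = (dist i e_connected (p x)).+1.
Proof.
move=> p_parent x xNi; have [x_px px_min] := p_parent x xNi.
have [y xy dist_xy] := dist_step e_connected xNi.
have := px_min y xy.
rewrite !f_eq_edge_spread_dist ler_pM2l ?edge_spread_gt0 // ler_nat.
by have := dist_edge i e_connected x_px; lia.
Qed.

End SpreadMinimizer.

Theorem theorem21 (R : realType) (V : finType) (e : rel V) (i : V)
  (f : V -> R) (p : V -> V) :
  simple_graph e ->
  connected_graph e ->
  connected_minus e i ->
  is_minimizer e i f ->
  (exists j0 : V, 0 < f j0) ->
  spread_parent e i f p ->
  forall j : V, spread_path_is_shortest e i p j.
Proof.
move=> e_simple e_connected e_connected_minus f_min f_pos p_parent.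
apply: (spread_path_is_shortest_of_dist_parent (e_connected := e_connected)).
exact: (dist_spread_parent e_simple _ e_connected_minus f_min f_pos p_parent).
Qed.
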